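(* Let $c>0$ and let $h$ additionally satisfy $h(y)>-1$ for $y\in(-\pi,\pi)$. For $\vartheta\in(-1,1)$ and $y\in(-\pi,\pi]$ let $u(x,t;\vartheta,y)$ be the entire solution of $\partial_t u=\partial_{xx}u-c\partial_x u$ ($x>0$), $\partial_x u=1+\vartheta h(u)$ ($x=0$), which is relative periodic ($u(\cdot,t+T)=u(\cdot,t)-2\pi$ for a minimal $T=T(\vartheta)>0$), satisfies $\partial_x u>0$, $\partial_t u<0$, and is normalized by $u(0,0;\vartheta,y)=y$. Then for every fixed $y\in(-\pi,\pi]$ and all $M>0$, $\tau>0$, the family $\{u(\cdot,\cdot;\vartheta,y):\vartheta\in(-1,1)\}$ is uniformly bounded in $L^\infty([0,M]\times[-\tau,\tau])$.
   Context: $h\in C^2(\mathbb{R},\mathbb{R})$ is $2\pi$-periodic with $\max h=1$, $\min h=h(\pi)=-1$. Entire solutions are classical solutions for all $t\in\mathbb{R}$ with $e^{-cx/2}u(\cdot,t)$ bounded and uniformly continuous on $[0,\infty)$. For each $\vartheta\in(-1,1)$ such relative periodic monotone solutions exist and are unique up to time translation among entire solutions with $\partial_t u<0$, so the normalization is well defined. *)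

From Stdlib Require Import Reals.
From Coquelicot Require Import Coquelicot.
Open Scope R_scope.

Definition admissible_h (h : R -> R) : Prop :=
  (forall x, ex_derive_n h 2 x) /\
  (forall x, continuous (Derive_n h 2) x) /\
  (forall x, h (x + 2 * PI) = h x) /\
  (forall x, h x <= 1) /\ (exists x, h x = 1) /\
  (forall x, -1 <= h x) /\ h PI = -1.

Definition cont_halfplane (u : R -> R -> R) : Prop :=
  forall x0 t0, 0 <= x0 -> forall eps, 0 < eps -> exists delta, 0 < delta /\
    forall x t, 0 <= x -> Rabs (x - x0) < delta -> Rabs (t - t0) < delta ->
      Rabs (u x t - u x0 t0) < eps.

Definition entire_solution (c theta : R) (h : R -> R) (u : R -> R -> R) : Prop :=
  cont_halfplane u /\
  (forall x t, 0 < x ->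
     ex_derive (fun s => u s t) x /\
     ex_derive_n (fun s => u s t) 2 x /\
     ex_derive (fun s => u x s) t /\
     Derive (fun s => u x s) t =
       Derive_n (fun s => u s t) 2 x - c * Derive (fun s => u s t) x) /\
  (forall t, filterlim (fun s => (u s t - u 0 t) / s) (at_right 0)
                       (locally (1 + theta * h (u 0 t)))) /\
  (forall t, exists B, forall x, 0 <= x -> Rabs (exp (- c * x / 2) * u x t) <= B) /\
  (forall t eps, 0 < eps -> exists delta, 0 < delta /\
     forall x1 x2, 0 <= x1 -> 0 <= x2 -> Rabs (x1 - x2) < delta ->
       Rabs (exp (- c * x1 / 2) * u x1 t - exp (- c * x2 / 2) * u x2 t) < eps).

Definition relative_periodic (u : R -> R -> R) (T : R) : Prop :=
  0 < T /\
  (forall x t, 0 <= x -> u x (t + T) = u x t - 2 * PI) /\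
  (forall T', 0 < T' < T ->
     ~ (forall x t, 0 <= x -> u x (t + T') = u x t - 2 * PI)).

Definition rel_periodic_monotone_solution (c theta : R) (h : R -> R)
    (u : R -> R -> R) : Prop :=
  entire_solution c theta h u /\
  (exists T, relative_periodic u T) /\
  (forall x t, 0 < x -> 0 < Derive (fun s => u s t) x) /\
  (forall t, 0 < 1 + theta * h (u 0 t)) /\
  (forall x t, 0 <= x -> ex_derive (fun s => u x s) t /\
                         Derive (fun s => u x s) t < 0).

From Stdlib Require Import Reals Lra Classical.
From Coquelicot Require Import Coquelicot.
Open Scope R_scope.

(* Uniformly in theta the boundary slope B = 1 + theta h(u) stays below 2,
   and this controls u on [0, M] x [-tau, tau] from the single value u(0,0).
   In space, u_xx - c u_x = u_t < 0 makes e^(-cx) u_x nonincreasing, so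
   0 < u_x <= B e^(cx) <= 2 e^(cx) and u(0,t) <= u(x,t) <= u(0,t) + 2x e^(cx).
   In time, u(0,.) decreases, but no faster than linearly: the parabola
   u(0,t0) - 2 + 2x - x^2 - (2c+3)(t - t0) lies below u on [0,3] at t = t0
   and, by a first-contact argument, stays below it afterwards. *)

Lemma MVT_is_derive (f df : R -> R) a b : a < b ->
  (forall x, a < x < b -> is_derive f x (df x)) ->
  (forall x, a <= x <= b -> continuity_pt f x) ->
  exists c, a < c < b /\ f b - f a = df c * (b - a).
Proof.
  intros Hab Hd Hc.
  assert (pr1 : forall c, a < c < b -> derivable_pt f c).
  { intros c Hc'. exists (df c). apply is_derive_Reals. now apply Hd. }
  assert (pr2 : forall c, a < c < b -> derivable_pt id c)
    by (intros c _; apply derivable_pt_id).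
  destruct (MVT f id a b pr1 pr2 Hab Hc
              (fun c _ => derivable_continuous_pt _ _ (derivable_pt_id c)))
    as [c [Hc' E]].
  exists c. split; [exact Hc'|].
  rewrite (derive_pt_eq_0 f c (df c) (pr1 c Hc')) in E
    by (apply is_derive_Reals; now apply Hd).
  rewrite (derive_pt_eq_0 id c 1 (pr2 c Hc') (derivable_pt_lim_id c)) in E.
  unfold id in E. lra.
Qed.

Lemma is_derive_neg_right (f : R -> R) x l : is_derive f x l -> l < 0 ->
  exists e, 0 < e /\ forall y, x < y < x + e -> f y < f x.
Proof.
  intros Hd Hl. apply is_derive_Reals in Hd.
  destruct (Hd (- l) ltac:(lra)) as [e He].
  exists e. split; [apply cond_pos|]. intros y Hy.
  specialize (He (y - x) ltac:(lra) ltac:(rewrite Rabs_right; lra)).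
  replace (x + (y - x)) with y in He by ring.
  apply Rabs_def2 in He.
  assert (E : f y - f x = (f y - f x) / (y - x) * (y - x)) by (field; lra).
  nra.
Qed.

Lemma is_derive_pos_left (f : R -> R) x l : is_derive f x l -> 0 < l ->
  exists e, 0 < e /\ forall y, x - e < y < x -> f y < f x.
Proof.
  intros Hd Hl.
  assert (Hr : is_derive (fun s => f (- s)) (- x) (- l)).
  { replace (- l) with (scal (-1) l) by (unfold scal; simpl; unfold mult; simpl; ring).
    apply (is_derive_comp f Ropp); [now rewrite Ropp_involutive | auto_derive; [auto | ring]]. }
  destruct (is_derive_neg_right _ _ _ Hr ltac:(lra)) as [e [He H]].
  exists e. split; [exact He|]. intros y Hy.
  specialize (H (- y) ltac:(lra)). now rewrite !Ropp_involutive in H.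
Qed.

Lemma is_derive_nonneg_of_right_min (f : R -> R) x l d : is_derive f x l -> 0 < d ->
  (forall y, x < y < x + d -> f x <= f y) -> 0 <= l.
Proof.
  intros Hd Hdp Hmin. apply Rnot_lt_le. intro Hl.
  destruct (is_derive_neg_right f x l Hd Hl) as [e [He H]].
  assert (Hm := Rmin_glb_lt d e 0 Hdp He).
  pose proof (Rmin_l d e). pose proof (Rmin_r d e).
  specialize (H (x + Rmin d e / 2) ltac:(lra)).
  specialize (Hmin (x + Rmin d e / 2) ltac:(lra)). lra.
Qed.

Lemma is_derive_nonpos_of_left_min (f : R -> R) x l d : is_derive f x l -> 0 < d ->
  (forall y, x - d < y < x -> f x <= f y) -> l <= 0.
Proof.
  intros Hd Hdp Hmin. apply Rnot_lt_le. intro Hl.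
  destruct (is_derive_pos_left f x l Hd Hl) as [e [He H]].
  assert (Hm := Rmin_glb_lt d e 0 Hdp He).
  pose proof (Rmin_l d e). pose proof (Rmin_r d e).
  specialize (H (x - Rmin d e / 2) ltac:(lra)).
  specialize (Hmin (x - Rmin d e / 2) ltac:(lra)). lra.
Qed.

Lemma is_derive_local_min (f : R -> R) x l d : is_derive f x l -> 0 < d ->
  (forall y, Rabs (y - x) < d -> f x <= f y) -> l = 0.
Proof.
  intros Hd Hdp Hmin. apply Rle_antisym.
  - apply (is_derive_nonpos_of_left_min f x l d Hd Hdp).
    intros y Hy. apply Hmin. rewrite Rabs_left; lra.
  - apply (is_derive_nonneg_of_right_min f x l d Hd Hdp).
    intros y Hy. apply Hmin. rewrite Rabs_right; lra.
Qed.

Lemma is_derive2_local_min (g g' : R -> R) x l d : 0 < d ->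
  (forall y, Rabs (y - x) < d -> is_derive g y (g' y)) -> is_derive g' x l ->
  (forall y, Rabs (y - x) < d -> g x <= g y) -> 0 <= l.
Proof.
  intros Hdp Hg Hg' Hmin.
  assert (Hball : forall y, x <= y < x + d -> Rabs (y - x) < d)
    by (intros y Hy; rewrite Rabs_right; lra).
  assert (Hcrit : g' x = 0).
  { apply (is_derive_local_min g x _ d); auto. apply Hg. now rewrite Rminus_diag, Rabs_R0. }
  apply Rnot_lt_le. intro Hl.
  destruct (is_derive_neg_right g' x l Hg' Hl) as [e [He Hneg]].
  assert (Hm := Rmin_glb_lt d e 0 Hdp He).
  pose proof (Rmin_l d e). pose proof (Rmin_r d e).
  set (y := x + Rmin d e / 2).
  destruct (MVT_is_derive g g' x y) as [xi [Hxi E]].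
  - unfold y; lra.
  - intros z Hz. apply Hg, Hball. unfold y in Hz; lra.
  - intros z Hz. apply continuity_pt_filterlim, (ex_derive_continuous g).
    exists (g' z). apply Hg, Hball. unfold y in Hz; lra.
  - specialize (Hneg xi ltac:(unfold y in Hxi; lra)).
    specialize (Hmin y (Hball y ltac:(unfold y; lra))).
    assert (g' xi * (y - x) < 0) by (apply Rmult_neg_pos; unfold y in *; lra).
    lra.
Qed.

Lemma touching_from_below (f p p' : R -> R) p'' x d : 0 < d ->
  (forall y, Rabs (y - x) < d -> ex_derive f y /\ is_derive p y (p' y)) ->
  ex_derive_n f 2 x -> is_derive p' x p'' ->
  (forall y, Rabs (y - x) < d -> f x - p x <= f y - p y) ->
  Derive f x = p' x /\ p'' <= Derive_n f 2 x.
Proof.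
  intros Hdp Hd Hf2 Hp' Hmin.
  assert (Hx : Rabs (x - x) < d) by (now rewrite Rminus_diag, Rabs_R0).
  assert (Hg : forall y, Rabs (y - x) < d ->
      is_derive (fun s => f s - p s) y (Derive f y - p' y)).
  { intros y Hy. destruct (Hd y Hy) as [Hfy Hpy].
    exact (is_derive_minus _ _ y _ _ (Derive_correct f y Hfy) Hpy). }
  assert (Hg' : is_derive (fun s => Derive f s - p' s) x (Derive_n f 2 x - p'')).
  { apply (is_derive_minus (Derive f) p'); [|exact Hp'].
    change (is_derive (Derive_n f 1) x (Derive (Derive_n f 1) x)).
    now apply Derive_correct. }
  split.
  - assert (Derive f x - p' x = 0) by exact (is_derive_local_min _ x _ d (Hg x Hx) Hdp Hmin).
    lra.
  - assert (0 <= Derive_n f 2 x - p'') by exact (is_derive2_local_min _ _ x _ d Hdp Hg Hg' Hmin).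
    lra.
Qed.

Lemma continuity_2d_pt_slice_l (f : R -> R -> R) x y :
  continuity_2d_pt f x y -> continuity_pt (fun z => f z y) x.
Proof.
  intros Hf eps Heps. destruct (Hf (mkposreal eps Heps)) as [d Hd].
  exists d. split; [apply cond_pos|]. intros z [_ Hz].
  apply Hd; [exact Hz | rewrite Rminus_diag, Rabs_R0; apply cond_pos].
Qed.

Lemma continuity_2d_pt_slice_r (f : R -> R -> R) x y :
  continuity_2d_pt f x y -> continuity_pt (fun z => f x z) y.
Proof.
  intros Hf eps Heps. destruct (Hf (mkposreal eps Heps)) as [d Hd].
  exists d. split; [apply cond_pos|]. intros z [_ Hz].
  apply Hd; [rewrite Rminus_diag, Rabs_R0; apply cond_pos | exact Hz].
Qed.

(* Extending [u] to [x < 0] by [u 0 t] turns continuity on the closed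
   half-plane into plain continuity. *)
Lemma cont_halfplane_Rmax (u : R -> R -> R) : cont_halfplane u ->
  forall x t, continuity_2d_pt (fun x t => u (Rmax 0 x) t) x t.
Proof.
  intros Hu x t eps.
  destruct (Hu (Rmax 0 x) t (Rmax_l 0 x) eps (cond_pos eps)) as [d [Hd H]].
  exists (mkposreal d Hd). intros x' t' Hx Ht. apply H; [apply Rmax_l | | exact Ht].
  simpl in Hx. apply Rabs_def2 in Hx. apply Rabs_def1; unfold Rmax;
    repeat destruct Rle_dec; lra.
Qed.

Lemma continuity_pt_nonneg_of_pos_left (g : R -> R) t0 ts :
  continuity_pt g ts -> t0 < ts -> (forall t, t0 <= t < ts -> 0 < g t) -> 0 <= g ts.
Proof.
  intros Hg Hts Hpos. apply Rnot_lt_le. intro Hneg.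
  destruct (Hg (- g ts) ltac:(lra)) as [d [Hd H]].
  assert (Hm := Rmin_glb_lt d (ts - t0) 0 Hd ltac:(lra)).
  pose proof (Rmin_l d (ts - t0)). pose proof (Rmin_r d (ts - t0)).
  set (t := ts - Rmin d (ts - t0) / 2).
  assert (Hdist : R_dist (g t) (g ts) < - g ts).
  { apply H. split; [split; [exact I | unfold t; lra] |].
    simpl. unfold R_dist, t. rewrite Rabs_left; lra. }
  unfold R_dist in Hdist. apply Rabs_def2 in Hdist.
  specialize (Hpos t ltac:(unfold t; lra)). lra.
Qed.

Lemma positive_near (v : R -> R -> R) a b ts : a <= b ->
  (forall x, a <= x <= b -> continuity_2d_pt v x ts) ->
  (forall x, a <= x <= b -> 0 < v x ts) ->
  exists d, 0 < d /\ forall x t, a <= x <= b -> Rabs (t - ts) < d -> 0 < v x t.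
Proof.
  intros Hab Hv Hpos.
  destruct (continuity_ab_min (fun x => v x ts) a b Hab
              (fun x Hx => continuity_2d_pt_slice_l v x ts (Hv x Hx))) as [xm [Hmin Hxm]].
  destruct (uniform_continuity_2d_1d v a b ts Hv (mkposreal _ (Hpos xm Hxm))) as [d Hd].
  exists d. split; [apply cond_pos|]. intros x t Hx Ht.
  apply Rabs_def2 in Ht.
  assert (Hc : Rabs (v x t - v x ts) < v xm ts).
  { pose proof (cond_pos d).
    apply (Hd x ts x t); try lra.
    rewrite Rminus_diag, Rabs_R0. lra. }
  apply Rabs_def2 in Hc. specialize (Hmin x Hx). simpl in Hmin. lra.
Qed.

Lemma first_contact (v : R -> R -> R) a b t0 t1 : a <= b -> t0 <= t1 ->
  (forall x t, a <= x <= b -> continuity_2d_pt v x t) ->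
  (forall x, a <= x <= b -> 0 < v x t0) ->
  (exists x, a <= x <= b /\ v x t1 <= 0) ->
  exists ts xs, t0 < ts <= t1 /\ a <= xs <= b /\ v xs ts = 0 /\
    (forall x, a <= x <= b -> 0 <= v x ts) /\
    (forall t x, t0 <= t < ts -> a <= x <= b -> 0 < v x t).
Proof.
  intros Hab Ht01 Hv Hinit [x1 [Hx1 Hv1]].
  set (Good := fun t => t0 <= t <= t1 /\
                 forall t' x, t0 <= t' <= t -> a <= x <= b -> 0 < v x t').
  assert (Good0 : Good t0).
  { split; [lra|]. intros t' x Ht' Hx. replace t' with t0 by lra. now apply Hinit. }
  destruct (completeness Good) as [ts [Hub Hlub]].
  { exists t1. intros t [Ht _]. lra. }
  { now exists t0. }
  assert (Hts0 : t0 <= ts) by now apply Hub.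
  assert (Hts1 : ts <= t1) by (apply Hlub; intros t [Ht _]; lra).
  assert (Hbefore : forall t x, t0 <= t < ts -> a <= x <= b -> 0 < v x t).
  { intros t x Ht Hx. apply NNPP. intro Hn.
    assert (ts <= t); [|lra]. apply Hlub. intros g [Hg Hgpos].
    apply Rnot_lt_le. intro Htg. apply Hn. apply (Hgpos t x); lra. }
  destruct (classic (forall x, a <= x <= b -> 0 < v x ts)) as [Hall | Hnot].
  - exfalso. destruct (Req_dec ts t1) as [-> | Hne].
    { specialize (Hall x1 Hx1). lra. }
    destruct (positive_near v a b ts Hab (fun x Hx => Hv x ts Hx) Hall) as [d [Hd Hnear]].
    pose proof (Rmin_l t1 (ts + d / 2)). pose proof (Rmin_r t1 (ts + d / 2)).
    set (t2 := Rmin t1 (ts + d / 2)) in *.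
    assert (Hts2 : ts < t2) by (apply Rmin_glb_lt; lra).
    assert (Good t2).
    { split; [lra|]. intros t' x Ht' Hx. destruct (Rlt_le_dec t' ts).
      - apply Hbefore; lra.
      - apply Hnear; [exact Hx | rewrite Rabs_right; lra]. }
    assert (t2 <= ts) by now apply Hub. lra.
  - apply not_all_ex_not in Hnot. destruct Hnot as [xs Hxs].
    apply imply_to_and in Hxs. destruct Hxs as [Hxs Hvs].
    assert (Hts : t0 < ts).
    { destruct (Req_dec t0 ts) as [E|]; [|lra].
      rewrite <- E in Hvs. specialize (Hinit xs Hxs). lra. }
    assert (Hnonneg : forall x, a <= x <= b -> 0 <= v x ts).
    { intros x Hx. apply (continuity_pt_nonneg_of_pos_left (fun t => v x t) t0).
      - now apply continuity_2d_pt_slice_r, Hv.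
      - exact Hts.
      - intros t Ht. now apply Hbefore. }
    exists ts, xs. specialize (Hnonneg xs Hxs) as Hxs0.
    repeat split; auto; lra.
Qed.

Lemma at_right_0_eps (q : R -> R) L : filterlim q (at_right 0) (locally L) ->
  forall eps, 0 < eps -> exists d, 0 < d /\ forall s, 0 < s < d -> Rabs (q s - L) < eps.
Proof.
  intros Hq eps Heps.
  destruct (proj1 (filterlim_locally q L) Hq (mkposreal eps Heps)) as [d Hd].
  exists d. split; [apply cond_pos|]. intros s Hs. apply (Hd s); [|lra].
  change (Rabs (s - 0) < d). rewrite Rminus_0_r, Rabs_right; lra.
Qed.

Lemma at_right_0_lim_ge (q : R -> R) k L d : filterlim q (at_right 0) (locally L) ->
  0 < d -> (forall s, 0 < s < d -> k - s <= q s) -> k <= L.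
Proof.
  intros Hq Hd Hge. apply Rnot_lt_le. intro HL.
  destruct (at_right_0_eps q L Hq ((k - L) / 2) ltac:(lra)) as [e [He Hnear]].
  assert (Hm := Rmin_glb_lt d e 0 Hd He).
  pose proof (Rmin_l d e). pose proof (Rmin_r d e).
  set (s := Rmin (Rmin d e) ((k - L) / 2) / 2).
  pose proof (Rmin_l (Rmin d e) ((k - L) / 2)). pose proof (Rmin_r (Rmin d e) ((k - L) / 2)).
  assert (Hs : 0 < Rmin (Rmin d e) ((k - L) / 2)) by (apply Rmin_glb_lt; lra).
  specialize (Hnear s ltac:(unfold s; lra)). specialize (Hge s ltac:(unfold s; lra)).
  apply Rabs_def2 in Hnear. unfold s in *. lra.
Qed.

Lemma exp_le_compat x y : x <= y -> exp x <= exp y.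
Proof.
  intros [Hlt | ->]; [now apply Rlt_le, exp_increasing | apply Rle_refl].
Qed.

Lemma is_derive_exp_Derive (f : R -> R) c x : ex_derive_n f 2 x ->
  is_derive (fun s => exp (- c * s) * Derive f s) x
    (exp (- c * x) * (Derive_n f 2 x - c * Derive f x)).
Proof.
  intros Hf2.
  assert (He : is_derive (fun s => exp (- c * s)) x (- c * exp (- c * x)))
    by (auto_derive; [auto | ring]).
  assert (HD : is_derive (Derive f) x (Derive_n f 2 x)).
  { change (is_derive (Derive_n f 1) x (Derive (Derive_n f 1) x)).
    now apply Derive_correct. }
  replace (exp (- c * x) * (Derive_n f 2 x - c * Derive f x)) with
    (- c * exp (- c * x) * Derive f x + exp (- c * x) * Derive_n f 2 x) by ring.
  exact (is_derive_mult _ _ x _ _ He HD (fun a b => Rmult_comm a b)).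
Qed.

Section HalfLine.

Variables (f : R -> R) (c L : R).

Hypothesis c_nonneg : 0 <= c.
(* continuity of [f] on the closed half-line [0, +oo) *)
Hypothesis f_cont : forall x, continuity_pt (fun s => f (Rmax 0 s)) x.
Hypothesis f_ex : forall x, 0 < x -> ex_derive f x.
Hypothesis f_ex2 : forall x, 0 < x -> ex_derive_n f 2 x.
Hypothesis f_x_pos : forall x, 0 < x -> 0 < Derive f x.
Hypothesis f_super : forall x, 0 < x -> Derive_n f 2 x - c * Derive f x < 0.
Hypothesis f_slope : filterlim (fun s => (f s - f 0) / s) (at_right 0) (locally L).

Lemma MVT_halfline a b : 0 <= a < b ->
  exists xi, a < xi < b /\ f b - f a = Derive f xi * (b - a).
Proof.
  intros Hab.
  destruct (MVT_is_derive (fun s => f (Rmax 0 s)) (Derive f) a b) as [xi [Hxi E]].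
  - lra.
  - intros x Hx. apply (is_derive_ext_loc f).
    + exists (mkposreal x ltac:(lra)). intros s Hs.
      change (Rabs (s - x) < x) in Hs. apply Rabs_def2 in Hs.
      rewrite Rmax_right by lra. reflexivity.
    + apply Derive_correct, f_ex. lra.
  - intros x _. apply f_cont.
  - exists xi. split; [exact Hxi|].
    now rewrite !Rmax_right in E by lra.
Qed.

Lemma halfline_nondecreasing a b : 0 <= a <= b -> f a <= f b.
Proof.
  intros Hab. destruct (Req_dec a b) as [-> | Hne]; [lra|].
  destruct (MVT_halfline a b ltac:(lra)) as [xi [Hxi E]].
  specialize (f_x_pos xi ltac:(lra)). nra.
Qed.

Lemma exp_Derive_nonincreasing a b : 0 < a < b ->
  exp (- c * b) * Derive f b <= exp (- c * a) * Derive f a.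
Proof.
  intros Hab.
  assert (Hincr := incr_function (fun s => - (exp (- c * s) * Derive f s)) 0 p_infty
    (fun s => - (exp (- c * s) * (Derive_n f 2 s - c * Derive f s)))).
  apply Ropp_le_cancel, Rlt_le, Hincr; try easy; try (simpl; lra).
  - intros x Hx _. apply (is_derive_opp (fun s => exp (- c * s) * Derive f s)).
    now apply is_derive_exp_Derive, f_ex2.
  - intros x Hx _. pose proof (exp_pos (- c * x)). specialize (f_super x Hx).
    cbv beta. nra.
Qed.

Lemma exp_Derive_le_slope x : 0 < x -> exp (- c * x) * Derive f x <= L.
Proof.
  intros Hx. apply Rnot_lt_le. intro HL.
  set (G := exp (- c * x) * Derive f x) in *.
  destruct (at_right_0_eps _ _ f_slope (G - L) ltac:(lra)) as [d [Hd Hnear]].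
  assert (Hm := Rmin_glb_lt d x 0 Hd Hx).
  pose proof (Rmin_l d x). pose proof (Rmin_r d x).
  set (s := Rmin d x / 2).
  specialize (Hnear s ltac:(unfold s; lra)). apply Rabs_def2 in Hnear.
  destruct (MVT_halfline 0 s ltac:(unfold s; lra)) as [xi [Hxi E]].
  replace ((f s - f 0) / s) with (Derive f xi) in Hnear
    by (rewrite E; field; unfold s; lra).
  assert (Hdecr : G <= exp (- c * xi) * Derive f xi)
    by (apply exp_Derive_nonincreasing; unfold s in Hxi; lra).
  assert (exp (- c * xi) <= 1) by (rewrite <- exp_0; apply exp_le_compat; nra).
  specialize (f_x_pos xi ltac:(lra)). nra.
Qed.

Lemma halfline_upper_bound x : 0 <= x -> f x <= f 0 + L * x * exp (c * x).
Proof.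
  intros Hx. destruct (Req_dec x 0) as [-> | Hne].
  { rewrite Rmult_0_r, Rmult_0_l, Rplus_0_r. apply Rle_refl. }
  destruct (MVT_halfline 0 x ltac:(lra)) as [xi [Hxi E]].
  assert (Hslope := exp_Derive_le_slope xi ltac:(lra)).
  assert (Hinv : exp (- c * xi) * exp (c * xi) = 1)
    by (rewrite <- exp_plus, <- exp_0; f_equal; ring).
  assert (Hmon : exp (c * xi) <= exp (c * x)) by (apply exp_le_compat; nra).
  specialize (f_x_pos xi ltac:(lra)).
  pose proof (exp_pos (c * xi)). pose proof (exp_pos (- c * xi)).
  assert (HD : Derive f xi <= L * exp (c * xi)) by nra.
  assert (HL : 0 < L) by nra.
  assert (Derive f xi * x <= L * exp (c * x) * x).
  { apply Rmult_le_compat_r; [lra|].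
    apply (Rle_trans _ _ _ HD), Rmult_le_compat_l; lra. }
  lra.
Qed.

End HalfLine.
Section MonotoneSolution.

Variables (c : R) (B : R -> R) (u : R -> R -> R).

Hypothesis c_pos : 0 < c.
Hypothesis u_cont : cont_halfplane u.
Hypothesis u_interior : forall x t, 0 < x ->
  ex_derive (fun s => u s t) x /\ ex_derive_n (fun s => u s t) 2 x /\
  ex_derive (fun s => u x s) t /\
  Derive (fun s => u x s) t =
    Derive_n (fun s => u s t) 2 x - c * Derive (fun s => u s t) x.
Hypothesis u_boundary : forall t,
  filterlim (fun s => (u s t - u 0 t) / s) (at_right 0) (locally (B t)).
Hypothesis u_x_pos : forall x t, 0 < x -> 0 < Derive (fun s => u s t) x.
Hypothesis u_t_neg : forall x t, 0 <= x ->
  ex_derive (fun s => u x s) t /\ Derive (fun s => u x s) t < 0.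
Hypothesis B_lt_2 : forall t, B t < 2.

Lemma u_slice_cont t x : continuity_pt (fun s => u (Rmax 0 s) t) x.
Proof.
  exact (continuity_2d_pt_slice_l _ x t (cont_halfplane_Rmax u u_cont x t)).
Qed.

Lemma u_nondecreasing_x t a b : 0 <= a <= b -> u a t <= u b t.
Proof.
  exact (halfline_nondecreasing (fun s => u s t) (u_slice_cont t)
           (fun x Hx => proj1 (u_interior x t Hx)) (fun x Hx => u_x_pos x t Hx) a b).
Qed.

Lemma u_nonincreasing_t x t1 t2 : 0 <= x -> t1 <= t2 -> u x t2 <= u x t1.
Proof.
  intros Hx [Hlt | ->]; [| apply Rle_refl].
  apply Ropp_le_cancel, Rlt_le.
  apply (incr_function (fun s => - u x s) m_infty p_infty
           (fun s => - Derive (fun s => u x s) s)); [| | exact I | exact Hlt | exact I].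
  - intros t _ _. exact (is_derive_opp (fun s => u x s) t _
                           (Derive_correct _ t (proj1 (u_t_neg x t Hx)))).
  - intros t _ _. cbv beta. specialize (u_t_neg x t Hx). lra.
Qed.

Lemma u_xx_sub_c_u_x_neg x t : 0 < x ->
  Derive_n (fun s => u s t) 2 x - c * Derive (fun s => u s t) x < 0.
Proof.
  intros Hx. destruct (u_interior x t Hx) as [_ [_ [_ <-]]].
  apply u_t_neg. lra.
Qed.

Lemma u_upper_bound t x : 0 <= x -> u x t <= u 0 t + 2 * x * exp (c * x).
Proof.
  intros Hx.
  assert (H := halfline_upper_bound (fun s => u s t) c (B t) (Rlt_le _ _ c_pos)
                 (u_slice_cont t)
                 (fun y Hy => proj1 (u_interior y t Hy))
                 (fun y Hy => proj1 (proj2 (u_interior y t Hy)))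
                 (fun y Hy => u_x_pos y t Hy) (fun y Hy => u_xx_sub_c_u_x_neg y t Hy)
                 (u_boundary t) x Hx).
  assert (0 <= x * exp (c * x)) by (pose proof (exp_pos (c * x)); nra).
  specialize (B_lt_2 t). cbv beta in H. nra.
Qed.

(* Slope 2 > B at x = 0 rules out contact at the boundary, and the speed
   2c + 3 beats the value >= -2 - 2c of u_xx - c u_x at an interior contact. *)
Definition barrier (Y t0 x t : R) : R :=
  Y - 2 + (2 * x - x * x) - (2 * c + 3) * (t - t0).

Lemma no_boundary_contact Y t0 ts :
  (forall x, 0 <= x <= 3 -> barrier Y t0 x ts <= u x ts) ->
  u 0 ts <> barrier Y t0 0 ts.
Proof.
  intros Hbelow E.
  assert (2 <= B ts); [| specialize (B_lt_2 ts); lra].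
  apply (at_right_0_lim_ge _ 2 (B ts) 3 (u_boundary ts) ltac:(lra)).
  intros s Hs. specialize (Hbelow s ltac:(lra)). unfold barrier in *.
  apply (Rmult_le_reg_r s); [lra|].
  unfold Rdiv. rewrite Rmult_assoc, Rinv_l, Rmult_1_r by lra. nra.
Qed.

Lemma no_interior_contact Y t0 ts xs : 0 < xs < 3 -> t0 < ts ->
  (forall x, 0 <= x <= 3 -> barrier Y t0 x ts <= u x ts) ->
  (forall t, t0 <= t < ts -> barrier Y t0 xs t < u xs t) ->
  u xs ts <> barrier Y t0 xs ts.
Proof.
  intros Hxs Hts Hbelow Hbefore E.
  set (d := Rmin xs (3 - xs)).
  assert (Hd : 0 < d) by (apply Rmin_glb_lt; lra).
  assert (Hball : forall y, Rabs (y - xs) < d -> 0 < y < 3).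
  { intros y Hy. apply Rabs_def2 in Hy.
    pose proof (Rmin_l xs (3 - xs)). pose proof (Rmin_r xs (3 - xs)). unfold d in *. lra. }
  destruct (touching_from_below (fun s => u s ts) (fun x => barrier Y t0 x ts)
              (fun x => 2 - 2 * x) (-2) xs d Hd) as [Hux Huxx].
  - intros y Hy. apply Hball in Hy.
    split; [exact (proj1 (u_interior y ts ltac:(lra))) |].
    unfold barrier. auto_derive; [auto | ring].
  - exact (proj1 (proj2 (u_interior xs ts ltac:(lra)))).
  - auto_derive; [auto | ring].
  - intros y Hy. specialize (Hbelow y ltac:(apply Hball in Hy; lra)). lra.
  - assert (Hspace : -2 - 2 * c <= Derive (fun s => u xs s) ts).
    { destruct (u_interior xs ts ltac:(lra)) as [_ [_ [_ ->]]].
      rewrite Hux. nra. }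
    assert (Htime : Derive (fun s => u xs s) ts + (2 * c + 3) <= 0).
    { apply (is_derive_nonpos_of_left_min (fun t => u xs t - barrier Y t0 xs t) ts _ (ts - t0)).
      - replace (Derive (fun s => u xs s) ts + (2 * c + 3))
          with (Derive (fun s => u xs s) ts - - (2 * c + 3)) by ring.
        apply (is_derive_minus (fun t => u xs t) (fun t => barrier Y t0 xs t)).
        + exact (Derive_correct _ ts (proj1 (u_t_neg xs ts ltac:(lra)))).
        + unfold barrier. auto_derive; [auto | ring].
      - lra.
      - intros t Ht. specialize (Hbefore t ltac:(lra)). lra. }
    lra.
Qed.

Lemma u_boundary_lower_bound t0 s : 0 <= s ->
  u 0 t0 - 2 - (2 * c + 3) * s < u 0 (t0 + s).
Proof.
  intros Hs.
  set (Y := u 0 t0).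
  set (v := fun x t => u (Rmax 0 x) t - barrier Y t0 x t).
  assert (Ev : forall x t, 0 <= x -> v x t = u x t - barrier Y t0 x t)
    by (intros x t Hx; unfold v; now rewrite Rmax_right).
  apply Rnot_le_lt. intro Hle.
  destruct (first_contact v 0 3 t0 (t0 + s))
    as (ts & xs & Hts & Hxs & Hzero & Hnonneg & Hbefore).
  - lra.
  - lra.
  - intros x t _. apply continuity_2d_pt_minus; [apply cont_halfplane_Rmax, u_cont |].
    unfold barrier.
    repeat first [ apply continuity_2d_pt_minus | apply continuity_2d_pt_plus
                 | apply continuity_2d_pt_mult | apply continuity_2d_pt_id1
                 | apply continuity_2d_pt_id2 | apply continuity_2d_pt_const ].
  - intros x Hx. rewrite Ev by lra.
    pose proof (u_nondecreasing_x t0 0 x ltac:(lra)).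
    pose proof (Rle_0_sqr (x - 1)) as Hsq. unfold Rsqr in Hsq.
    unfold barrier, Y in *. lra.
  - exists 0. split; [lra|]. rewrite Ev by lra. unfold barrier, Y in *.
    replace (t0 + s - t0) with s by ring. lra.
  - assert (Hbelow : forall x, 0 <= x <= 3 -> barrier Y t0 x ts <= u x ts).
    { intros x Hx. specialize (Hnonneg x Hx). rewrite Ev in Hnonneg by lra. lra. }
    rewrite Ev in Hzero by lra.
    destruct (Req_dec xs 0) as [-> | Hx0].
    { apply (no_boundary_contact Y t0 ts Hbelow). lra. }
    destruct (Req_dec xs 3) as [-> | Hx3].
    { pose proof (Hbelow 0 ltac:(lra)). pose proof (u_nondecreasing_x ts 0 3 ltac:(lra)).
      unfold barrier in *. lra. }
    apply (no_interior_contact Y t0 ts xs ltac:(lra) ltac:(lra) Hbelow); [| lra].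
    intros t Ht. specialize (Hbefore t xs Ht Hxs). rewrite Ev in Hbefore by lra. lra.
Qed.

Lemma u_bounded M tau x t : 0 <= x <= M -> -tau <= t <= tau ->
  Rabs (u x t) <= Rabs (u 0 0) + 2 + (2 * c + 3) * tau + 2 * M * exp (c * M).
Proof.
  intros Hx Ht.
  assert (Hlow := u_boundary_lower_bound 0 tau ltac:(lra)).
  assert (Hup := u_boundary_lower_bound (- tau) tau ltac:(lra)).
  rewrite Rplus_0_l in Hlow. rewrite Rplus_opp_l in Hup.
  pose proof (u_nonincreasing_t 0 t tau ltac:(lra) ltac:(lra)).
  pose proof (u_nonincreasing_t 0 (- tau) t ltac:(lra) ltac:(lra)).
  pose proof (u_nondecreasing_x t 0 x ltac:(lra)).
  pose proof (u_upper_bound t x ltac:(lra)).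
  assert (x * exp (c * x) <= M * exp (c * M)).
  { apply Rmult_le_compat; [lra | apply Rlt_le, exp_pos | lra |].
    apply exp_le_compat. nra. }
  pose proof (Rle_abs (u 0 0)). pose proof (Rle_abs (- u 0 0)). rewrite Rabs_Ropp in *.
  apply Rabs_le. lra.
Qed.

End MonotoneSolution.

Lemma boundary_slope_lt_2 theta z : -1 < theta < 1 -> -1 <= z <= 1 -> 1 + theta * z < 2.
Proof.
  intros Ht Hz.
  assert (Rabs theta < 1) by (apply Rabs_def1; lra).
  assert (Rabs z <= 1) by (apply Rabs_le; lra).
  assert (Rabs (theta * z) < 1).
  { rewrite Rabs_mult. pose proof (Rabs_pos theta). pose proof (Rabs_pos z). nra. }
  pose proof (Rle_abs (theta * z)). lra.
Qed.

Theorem lemma17 (c : R) (h : R -> R) :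
  0 < c ->
  admissible_h h ->
  (forall z, -PI < z < PI -> -1 < h z) ->
  forall y, -PI < y <= PI ->
  forall M tau, 0 < M -> 0 < tau ->
  exists K, forall theta, -1 < theta < 1 ->
    forall u : R -> R -> R,
      rel_periodic_monotone_solution c theta h u ->
      u 0 0 = y ->
      forall x t, 0 <= x <= M -> -tau <= t <= tau -> Rabs (u x t) <= K.
Proof.
  intros Hc Hadm _ y _ M tau _ _.
  destruct Hadm as (_ & _ & _ & Hh_le & _ & Hh_ge & _).
  exists (Rabs y + 2 + (2 * c + 3) * tau + 2 * M * exp (c * M)).
  intros theta Htheta u [[Hcont [Hint [Hbc _]]] [_ [Hux [_ Hut]]]] <- x t Hx Ht.
  apply (u_bounded c (fun s => 1 + theta * h (u 0 s)) u Hc Hcont Hint Hbc Hux Hut); auto.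
  intros s. apply boundary_slope_lt_2; auto.
Qed.
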